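(* Let $G$ be a finite group, $X=\{x_1,\dots,x_n\}$ with $n\ge2$, and fix a function $X\to G$ whose image generates $G$. Let $(\mathcal X_l)_{l\ge1}$ be a non-backtracking random walk on $(G,X)$ and $(\overline{\mathcal X}_l)$ its summed process. If $(\mathcal X_l)$ is aperiodic, then $\overline{\mathcal X}_l$ converges in distribution, as $l\to\infty$, to the uniform distribution on $G$. Otherwise there exists a subgroup $H\le G$ of index $2$ with $x_i\notin H$ for all $i$ such that $\overline{\mathcal X}_{2l}$ converges in distribution to the uniform distribution on $H$ and $\overline{\mathcal X}_{2l+1}$ converges in distribution to the uniform distribution on $G\setminus H$.
   Context: Let $G$ be a group, $X=\{x_1,\dots,x_n\}$ a set with $n\ge 2$, and fix a function $X\to G$; we identify each $x_i$ with its image in $G$. Let $\Omega=G\times\{\pm1,\pm2,\dots,\pm n\}$, with elements written $(g,\epsilon i)$, $g\in G$, $\epsilon=\pm1$, $i\in\{1,\dots,n\}$. A non-backtracking random walk on $(G,X)$ is a Markov chain $(\mathcal X_l)_{l\ge1}$ on $\Omega$ with transition probabilities $\mathbb P(\mathcal X_{l+1}=(g,\epsilon i)\mid \mathcal X_l=(h,\epsilon' j))=\alpha_{\epsilon' j,\epsilon i}$ if $g=hx_i^{\epsilon}$ and $\epsilon i\neq -\epsilon' j$, and $=0$ otherwise, where the $\alpha_{\epsilon' j,\epsilon i}$ are positive constants with $\sum_{\epsilon i\neq-\epsilon' j}\alpha_{\epsilon' j,\epsilon i}=1$ for each $\epsilon' j$; and with initial distribution $\mathbb P(\mathcal X_1=(g,\epsilon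 i))=\beta_{\epsilon i}$ if $g=x_i^{\epsilon}$ and $0$ otherwise, for positive constants $\beta_{\epsilon i}$ summing to $1$. Irreducibility and period refer to the Markov chain on the full state space $\Omega$. The summed process $\overline{\mathcal X}_l$ is the image of $\mathcal X_l$ under the projection $\Omega\to G$, i.e. $\mathbb P(\overline{\mathcal X}_l=g)=\sum_{\epsilon i}\mathbb P(\mathcal X_l=(g,\epsilon i))$. *)

(* Probabilities live in an arbitrary Archimedean real field R
   (e.g. the real numbers). *)
From HB Require Import structures.
From mathcomp Require Import all_boot all_order all_algebra all_fingroup.
Set Implicit Arguments. Unset Strict Implicit. Unset Printing Implicit Defensive.
Import Order.TTheory GRing.Theory Num.Theory.
Local Open Scope ring_scope.

(* Signed indices  \epsilon i  are encoded as  (b, i) : bool * 'I_n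
   with b = true for  +i  and b = false for  -i. *)
Definition sidx (n : nat) := (bool * 'I_n)%type.
Definition sopp (n : nat) (a : sidx n) : sidx n := (~~ a.1, a.2).

Section NBRW.
Variables (R : archiRealFieldType) (gT : finGroupType) (n : nat).
Variable x : 'I_n -> gT.
Variable alpha : sidx n -> sidx n -> R.
Variable beta : sidx n -> R.

Definition sgen (a : sidx n) : gT :=
  (if a.1 then x a.2 else (x a.2)^-1)%g.

Definition state := (gT * sidx n)%type.

Definition trans (s t : state) : R :=
  if (t.1 == (s.1 * sgen t.2)%g) && (t.2 != sopp s.2) then alpha s.2 t.2 else 0.

Fixpoint ntrans (l : nat) (s t : state) : R :=
  if l is l'.+1 then \sum_(u : state) ntrans l' s u * trans u t
  else (s == t)%:R.

Definition aperiodic : Prop :=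
  forall (s : state) (d : nat),
    (forall l : nat, (0 < l)%N -> 0 < ntrans l s s -> (d %| l)%N) -> d = 1%N.

Definition init_dist (s : state) : R :=
  if s.1 == sgen s.2 then beta s.2 else 0.

(* dist l s = P(X_l = s) for l >= 1 (dist 0 is a dummy zero). *)
Fixpoint dist (l : nat) : state -> R :=
  match l with
  | 0 => fun _ => 0
  | 1 => init_dist
  | l'.+1 => fun t => \sum_(s : state) dist l' s * trans s t
  end.

Definition summed (l : nat) (g : gT) : R :=
  \sum_(a : sidx n) dist l (g, a).

End NBRW.

Definition converges_to (R : archiRealFieldType) (u : nat -> R) (L : R) : Prop :=
  forall eps : R, 0 < eps -> exists N : nat, forall l : nat, (N <= l)%N -> `|u l - L| < eps.

From HB Require Import structures.
From mathcomp Require Import all_boot all_order all_algebra all_fingroup.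
From mathcomp Require Import zify ring lra.
Set Implicit Arguments. Unset Strict Implicit. Unset Printing Implicit Defensive.
Import Order.TTheory GRing.Theory Num.Theory.

(* Let H (Hev below) be the subgroup generated by the products x_i x_j, i.e.
   by the words of even length in the positive letters.  As the x_i generate G, every g is
   a positive word, so g or x_1 g lies in H: either H = G, or H has index 2,
   contains no x_i, and its cosets record the parity of word lengths.

   The walk follows every non-backtracking word with positive
   probability; positive words plus one turning step make the chain
   irreducible.  Comparing x_1^k x_2 with x_1^-(o-k) x_2 (o the order of x_1)
   yields loops at a base state of lengths 2a and 2a+2, hence of every large
   even length; when H = G there is also an odd loop.  So some power of P is
   positive on all pairs of states (H = G) or on all pairs in the same
   H-coset (H <> G, where the chain has period 2).

   Left translation by h commutes with the chain.  By Doeblin's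
   contraction the l^1 distance between the law of X_l and its h-translate
   decays geometrically for every h in H; averaging over h in H gives the
   uniform limit on the coset that carries the mass. *)

(* If an additive submonoid S of nat contains 2a and 2a + 2, it contains 2N
   for every N >= a^2: for a > 0 write N = q a + r with r < a <= q, so that
   2N = (q - r) 2a + r (2a + 2). *)
Lemma even_sums_large (S : nat -> Prop) (a : nat) :
  S 0%N -> (forall u v, S u -> S v -> S (u + v)%N) ->
  S (2 * a)%N -> S (2 * a + 2)%N -> forall N, (a * a <= N)%N -> S (2 * N)%N.
Proof.
move=> S0 SD Sa Sa2.
have Smul c k : S c -> S (k * c)%N.
  by move=> Sc; elim: k => [|k IH]; rewrite ?mul0n // mulSn; apply: SD.
move=> N leN; case: a Sa Sa2 leN => [|a] Sa Sa2 leN; first by rewrite mulnC; apply: Smul.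
have le_q : (a.+1 <= N %/ a.+1)%N by rewrite leq_divRL.
have lt_r : (N %% a.+1 < a.+1)%N by rewrite ltn_mod.
have -> : (2 * N = (N %/ a.+1 - N %% a.+1) * (2 * a.+1)
                   + N %% a.+1 * (2 * a.+1 + 2))%N.
  rewrite {1}(divn_eq N a.+1).
  by move: (N %/ a.+1) (N %% a.+1) le_q lt_r => q r; nia.
by apply: SD; apply: Smul.
Qed.

Lemma eventually_all (T : finType) (Q : nat -> T -> Prop) :
  (forall t, exists M, forall l, (M <= l)%N -> Q l t) ->
  exists M, forall t l, (M <= l)%N -> Q l t.
Proof.
move=> h; have [f hf] := fin_all_exists h.
exists (\max_t f t)%N => t l hl; apply: hf; exact: leq_trans (leq_bigmax t) hl.
Qed.

Local Open Scope ring_scope.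

Definition vanishing (R : numDomainType) (u : nat -> R) : Prop :=
  forall eps : R, 0 < eps -> exists N, forall l, (N <= l)%N -> `|u l| < eps.

Section RealFacts.
Variable R : realFieldType.

Lemma vanishing_le (u v : nat -> R) :
  (forall l, `|v l| <= u l) -> vanishing u -> vanishing v.
Proof.
move=> le_vu u0 eps eps0; have [N hN] := u0 eps eps0; exists N => l /hN.
by apply: le_lt_trans; apply: le_trans (le_vu l) (ler_norm _).
Qed.

Lemma vanishing_comp (u : nat -> R) (f : nat -> nat) :
  (forall l, (l <= f l)%N) -> vanishing u -> vanishing (fun l => u (f l)).
Proof.
move=> le_f u0 eps eps0; have [N hN] := u0 eps eps0.
by exists N => l hl; apply: hN; exact: leq_trans hl (le_f l).
Qed.

Lemma exists_pos_term (T : finType) (F : T -> R) :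
  (forall i, 0 <= F i) -> 0 < \sum_i F i -> exists i, 0 < F i.
Proof.
move=> F0 Fpos; apply/existsP; apply: contraTT Fpos => /existsPn Fnpos.
rewrite -leNgt big1 // => i _; apply: le_anti; rewrite F0 andbT.
by rewrite leNgt Fnpos.
Qed.

Lemma exists_pos_product (T : finType) (F G : T -> R) :
  (forall i, 0 <= F i) -> (forall i, 0 <= G i) -> 0 < \sum_i F i * G i ->
  exists i, 0 < F i /\ 0 < G i.
Proof.
move=> F0 G0 /exists_pos_term[i|i]; first by rewrite mulr_ge0.
move=> FG; exists i; move: FG; rewrite !lt_def F0 G0 mulf_eq0 negb_or !andbT.
by case/andP=> /andP[-> ->].
Qed.

Lemma pos_lower_bound (T : finType) (D : pred T) (F : T -> R) :
  (forall i, D i -> 0 < F i) -> exists2 dl, 0 < dl & forall i, D i -> dl <= F i.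
Proof.
move=> Fpos; set S := \sum_(i | D i) (F i)^-1.
have S0 : 0 <= S by apply: sumr_ge0 => i /Fpos /ltW; rewrite invr_ge0.
exists (S + 1)^-1; first by rewrite invr_gt0; lra.
move=> i Di; rewrite -[F i]invrK lef_pV2 ?posrE ?invr_gt0 ?Fpos //; last by lra.
rewrite /S (bigD1 i) //= -addrA lerDl; apply: addr_ge0 => //.
by apply: sumr_ge0 => j /andP[/Fpos /ltW]; rewrite invr_ge0.
Qed.

(* Then the l^1 norm of eta K is at most (1 - dl) times that of eta: on C the
   constant dl can be subtracted from K without changing eta K. *)
Lemma doeblin_contraction (T : finType) (K : T -> T -> R) (C : pred T)
    (dl : R) (eta : T -> R) (t0 : T) :
  (forall s t, 0 <= K s t) -> (forall s, \sum_t K s t = 1) ->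
  (forall s t, C s -> C t -> dl <= K s t) -> (forall s, ~~ C s -> eta s = 0) ->
  \sum_s eta s = 0 -> C t0 -> 0 <= dl ->
  \sum_t `|\sum_s eta s * K s t| <= (1 - dl) * \sum_s `|eta s|.
Proof.
move=> K0 K1 KC etaC eta0 Ct0 dl0.
have step t : `|\sum_s eta s * K s t| <= \sum_s `|eta s| * (K s t - (C t)%:R * dl).
  case Ct: (C t); last first.
    apply: le_trans (ler_norm_sum _ _ _) _; rewrite mul0r.
    by apply: ler_sum => s _; rewrite normrM subr0 (ger0_norm (K0 s t)).
  have -> : \sum_s eta s * K s t = \sum_s eta s * (K s t - dl).
    under [RHS]eq_bigr do rewrite mulrBr.
    by rewrite sumrB -mulr_suml eta0 mul0r subr0.
  apply: le_trans (ler_norm_sum _ _ _) _; rewrite mul1r.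
  apply: ler_sum => s _; rewrite normrM.
  case Cs: (C s); last by rewrite etaC ?Cs // normr0 !mul0r.
  by rewrite (ger0_norm (x := K s t - dl)) // subr_ge0 KC.
apply: le_trans (ler_sum _ (fun t _ => step t)) _.
rewrite exchange_big /= mulr_sumr; apply: ler_sum => s _.
have C1 : 1 <= \sum_(t : T) (C t)%:R :> R.
  by rewrite (bigD1 t0) //= Ct0 lerDl; apply: sumr_ge0 => t _; exact: ler0n.
rewrite -mulr_sumr sumrB K1 -mulr_suml mulrC; apply: ler_wpM2r => //.
by rewrite lerD2l lerN2 -[X in X <= _]mul1r; apply: ler_wpM2r.
Qed.

End RealFacts.

Section Archimedean.
Variable R : archiRealFieldType.

Lemma bernoulli_bound (rho dl : R) j : 0 <= rho -> 0 <= dl -> rho + dl = 1 ->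
  rho ^+ j * (1 + j%:R * dl) <= 1.
Proof.
move=> r0 d0 e; elim: j => [|j IH]; first by rewrite expr0 mul0r addr0 mul1r.
have hr1 : rho ^+ j <= 1 by apply: exprn_ile1 => //; lra.
rewrite exprS -mulrA -natr1 mulrDl mul1r addrA mulrDr.
have : rho * (rho ^+ j * (1 + j%:R * dl)) <= rho by rewrite ler_piMr.
have : rho ^+ j * dl <= dl by rewrite ler_piMl.
nra.
Qed.

Lemma block_contraction_vanishing (u : nat -> R) (rho C : R) (m : nat) :
  0 <= rho < 1 -> (forall l, (0 < l)%N -> 0 <= u l <= C) ->
  (forall l, (0 < l)%N -> u (l + m)%N <= rho * u l) -> vanishing u.
Proof.
move=> /andP[r0 r1] uC contr.
have C0 : 0 <= C by have /andP[u0 uC1] := uC 1%N isT; exact: le_trans uC1.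
have decay j l : (1 + j * m <= l)%N -> u l <= C * rho ^+ j.
  elim: j l => [|j IH] l hl; first by rewrite expr0 mulr1; case/andP: (uC l hl).
  rewrite mulSn addnCA in hl.
  have -> : l = ((l - m) + m)%N by rewrite subnK //; lia.
  apply: le_trans (contr _ _) _; first by lia.
  rewrite exprS mulrCA ler_wpM2l //; apply: IH; lia.
move=> eps eps0; set dl := 1 - rho.
have dl0 : 0 < dl by rewrite subr_gt0.
set j := Num.Def.archi_bound (C / (eps * dl)).
have hj : C / (eps * dl) < j%:R.
  by apply: archi_boundP; apply: divr_ge0 => //; apply: mulr_ge0; exact: ltW.
exists (1 + j * m)%N => l hl.
have [u0 _] := andP (uC l (leq_trans (leq_addr _ _) hl)).
rewrite ger0_norm //; apply: le_lt_trans (decay j l hl) _.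
have bernoulli := bernoulli_bound j r0 (ltW dl0) (subrKC rho 1).
have j0 : 0 <= j%:R :> R := ler0n R j.
have pos1 : 0 < 1 + j%:R * dl by nra.
have Cj : C < j%:R * (eps * dl) by rewrite -ltr_pdivrMr ?mulr_gt0.
rewrite -(ltr_pM2r pos1) -mulrA.
apply: (@le_lt_trans _ _ C); first by rewrite -[X in _ <= X]mulr1 ler_wpM2l.
nra.
Qed.

Lemma average_limit (I : finType) (A : {set I}) (u : nat -> R)
    (v : I -> nat -> R) :
  (0 < #|A|)%N -> (forall l, (0 < l)%N -> \sum_(h in A) v h l = 1) ->
  (forall h, h \in A -> vanishing (fun l => u l - v h l)) ->
  converges_to u (#|A|%:R)^-1.
Proof.
move=> A0 v1 uv eps eps0.
have [N hN] : exists N, forall h l, (N <= l)%N -> h \in A -> `|u l - v h l| < eps.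
  apply: (@eventually_all I (fun l h => h \in A -> `|u l - v h l| < eps)) => h.
  case hA: (h \in A); last by exists 0%N.
  by have [N hN] := uv h hA eps eps0; exists N => l /hN.
exists N.+1 => l hl; have l0 : (0 < l)%N by apply: leq_trans hl.
have cA : 0 < (#|A|%:R : R) by rewrite ltr0n.
have -> : u l - (#|A|%:R)^-1 = (\sum_(h in A) (u l - v h l)) / #|A|%:R.
  rewrite sumrB v1 // sumr_const -mulr_natr; field; exact: lt0r_neq0.
rewrite normrM normfV (ger0_norm (ltW cA)) ltr_pdivrMr //.
apply: le_lt_trans (ler_norm_sum _ _ _) _.
rewrite mulr_natr -sumr_const; apply: ltr_sum.
  by case/card_gt0P: A0 => h hA; apply/hasP; exists h; rewrite ?mem_index_enum.
by move=> h hA; apply: hN => //; exact: ltnW.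
Qed.

End Archimedean.

Section Walk.
Variables (R : archiRealFieldType) (gT : finGroupType) (n : nat).
Variable x : 'I_n -> gT.
Variables (alpha : sidx n -> sidx n -> R) (beta : sidx n -> R).
Hypothesis n_ge2 : (2 <= n)%N.
Hypothesis x_gen : <<[set x i | i : 'I_n]>>%g = [set: gT].
Hypothesis alpha_pos : forall a b : sidx n, b != sopp a -> 0 < alpha a b.
Hypothesis alpha_sum : forall a : sidx n, \sum_(b | b != sopp a) alpha a b = 1.
Hypothesis beta_pos : forall a : sidx n, 0 < beta a.
Hypothesis beta_sum : \sum_(a : sidx n) beta a = 1.

Local Notation state := (state gT n).
Local Notation P := (trans x alpha).
Local Notation Pn := (ntrans x alpha).
Local Notation D := (dist x alpha beta).
Local Notation sg := (sgen x).

Lemma sum_graph (f : sidx n -> gT) (c : sidx n -> R) :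
  \sum_(t : state) (if t.1 == f t.2 then c t.2 else 0) = \sum_a c a.
Proof.
rewrite -(pair_big xpredT xpredT (fun g a => if g == f a then c a else 0)) /=.
rewrite exchange_big /=; apply: eq_bigr => a _.
by rewrite (bigD1 (f a)) //= eqxx big1 ?addr0 // => g /negbTE ->.
Qed.

Lemma trans_ge0 s t : 0 <= P s t.
Proof. by rewrite /trans; case: ifP => // /andP[_ /alpha_pos/ltW]. Qed.

Lemma trans_sum s : \sum_t P s t = 1.
Proof.
rewrite -(alpha_sum s.2) [RHS]big_mkcond -(sum_graph (fun b => s.1 * sg b)%g).
by apply: eq_bigr => t _; rewrite /trans; case: eqP.
Qed.

Lemma ntrans_ge0 l s t : 0 <= Pn l s t.
Proof.
elim: l t => [|l IH] t /=; first by rewrite ler0n.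
by apply: sumr_ge0 => u _; rewrite mulr_ge0 ?trans_ge0.
Qed.

Lemma ntrans_sum l s : \sum_t Pn l s t = 1.
Proof.
elim: l => [|l IH] /=.
  by rewrite (bigD1 s) //= eqxx big1 ?addr0 // => t /negbTE; rewrite eq_sym => ->.
rewrite exchange_big /= -{}IH; apply: eq_bigr => u _.
by rewrite -mulr_sumr trans_sum mulr1.
Qed.

Lemma ntrans1 s t : Pn 1 s t = P s t.
Proof.
rewrite /= (bigD1 s) //= eqxx mul1r big1 ?addr0 // => u /negbTE.
by rewrite eq_sym => ->; rewrite mul0r.
Qed.

Lemma ntransD m k s t : Pn (m + k) s t = \sum_u Pn m s u * Pn k u t.
Proof.
elim: k t => [|k IH] t.
  rewrite addn0 /= (bigD1 t) //= eqxx mulr1 big1 ?addr0 // => u /negbTE ->.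
  by rewrite mulr0.
rewrite addnS [LHS]/=; under eq_bigr do rewrite IH mulr_suml.
rewrite exchange_big /=; apply: eq_bigr => u _.
by rewrite mulr_sumr; apply: eq_bigr => v _; rewrite mulrA.
Qed.

Lemma distD l m t : (0 < l)%N -> D (l + m) t = \sum_s D l s * Pn m s t.
Proof.
move=> l0; elim: m t => [|m IH] t.
  rewrite addn0 (bigD1 t) //= eqxx mulr1 big1 ?addr0 // => u /negbTE.
  by rewrite eq_sym => ->; rewrite mulr0.
have -> : D (l + m.+1) t = \sum_s D (l + m) s * P s t.
  by rewrite addnS; case: (l + m)%N (leq_trans l0 (leq_addr m l)).
under eq_bigr do rewrite IH mulr_suml.
rewrite exchange_big /=; apply: eq_bigr => u _.
by rewrite mulr_sumr; apply: eq_bigr => v _; rewrite mulrA.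
Qed.

Lemma dist_ge0 l s : 0 <= D l s.
Proof.
elim: l s => [|[|l] IH] s //=; first by rewrite /init_dist; case: ifP => // _; exact: ltW.
by apply: sumr_ge0 => u _; rewrite mulr_ge0 ?trans_ge0.
Qed.

Lemma dist_sum l : (0 < l)%N -> \sum_s D l s = 1.
Proof.
elim: l => [|[|l] IH] // _; first by rewrite -beta_sum -(sum_graph sg beta).
rewrite exchange_big /= -{}IH //; apply: eq_bigr => u _.
by rewrite -mulr_sumr trans_sum mulr1.
Qed.

Definition tau (h : gT) (s : state) : state := ((h * s.1)%g, s.2).

Lemma tau_inj h : injective (tau h).
Proof. by move=> [a b] [c d] [/mulgI -> ->]. Qed.

Lemma ntrans_tau h l s t : Pn l (tau h s) (tau h t) = Pn l s t.
Proof.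
elim: l t => [|l IH] t /=; first by rewrite (inj_eq (@tau_inj h)).
rewrite (reindex_inj (@tau_inj h)) /=; apply: eq_bigr => u _.
by rewrite IH /trans /= -mulgA (inj_eq (mulgI h)).
Qed.

Definition pos l s t := 0 < Pn l s t.

Lemma pos0 (s : state) : pos 0 s s.
Proof. by rewrite /pos /= eqxx ltr01. Qed.

Lemma pos_trans l1 l2 s u t : pos l1 s u -> pos l2 u t -> pos (l1 + l2) s t.
Proof.
rewrite /pos ntransD => h1 h2; apply: lt_le_trans (mulr_gt0 h1 h2) _.
rewrite (bigD1 u) //= lerDl; apply: sumr_ge0 => v _.
by rewrite mulr_ge0 ?ntrans_ge0.
Qed.

Lemma pos_step s b : b != sopp s.2 -> pos 1 s ((s.1 * sg b)%g, b).
Proof. by move=> h; rewrite /pos ntrans1 /trans /= eqxx h /=; apply: alpha_pos. Qed.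

Lemma trans_pos_eq u t : 0 < P u t -> t.1 = (u.1 * sg t.2)%g.
Proof. by rewrite /trans; case: eqP => // _; rewrite ltxx. Qed.

Definition wprod (w : seq (sidx n)) : gT := (\prod_(b <- w) sg b)%g.

Lemma wprod_cat w1 w2 : wprod (w1 ++ w2) = (wprod w1 * wprod w2)%g.
Proof. by rewrite /wprod big_cat. Qed.

Lemma wprod_cons b w : wprod (b :: w) = (sg b * wprod w)%g.
Proof. by rewrite /wprod big_cons. Qed.

Lemma wprod_seq1 b : wprod [:: b] = sg b.
Proof. by rewrite /wprod big_seq1. Qed.

Lemma wprod_nseq m b : wprod (nseq m b) = (sg b ^+ m)%g.
Proof.
elim: m => [|m IH]; first by rewrite /wprod big_nil.
by rewrite [nseq _ _]/= wprod_cons IH expgS.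
Qed.

Definition nbr (a b : sidx n) := b != sopp a.

Lemma pos_word w s :
  path nbr s.2 w -> pos (size w) s ((s.1 * wprod w)%g, last s.2 w).
Proof.
elim: w s => [|b w IH] [g a] /=; first by rewrite /wprod big_nil mulg1 => _; exact: pos0.
case/andP=> nb nw; have := pos_trans (@pos_step (g, a) b nb) (IH ((g * sg b)%g, b) nw).
by rewrite wprod_cons mulgA.
Qed.

Definition positive (w : seq (sidx n)) := all (fun b : sidx n => b.1) w.

Lemma positive_cat w1 w2 : positive (w1 ++ w2) = positive w1 && positive w2.
Proof. exact: all_cat. Qed.

Lemma path_positive (a : sidx n) w : a.1 -> positive w -> path nbr a w.
Proof.
elim: w a => [|[c j] w IH] [b i] //= -> /andP[/= -> pw].
by rewrite IH.
Qed.

Lemma gen_words (A : {set gT}) (Q : seq (sidx n) -> bool) :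
  Q [::] -> (forall w1 w2, Q w1 -> Q w2 -> Q (w1 ++ w2)) ->
  (forall a, a \in A -> exists2 w, Q w & a = wprod w) ->
  forall g, g \in <<A>>%g -> exists2 w, Q w & g = wprod w.
Proof.
move=> Q0 Qcat QA g /gen_prodgP [k [c cA ->]].
elim: k c cA => [|k IH] c cA; first by exists [::]; rewrite ?big_ord0 /wprod ?big_nil.
rewrite big_ord_recl.
have [w1 Qw1 ->] := QA _ (cA ord0).
have [w2 Qw2 ->] := IH (fun i => c (lift ord0 i)) (fun i => cA _).
by exists (w1 ++ w2); rewrite ?wprod_cat ?Qcat.
Qed.

Lemma positive_word g : exists2 w, positive w & g = wprod w.
Proof.
apply: (gen_words (A := [set x i | i : 'I_n])); rewrite ?x_gen ?inE //.
  by move=> w1 w2 p1 p2; rewrite positive_cat p1.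
by move=> _ /imsetP[i _ ->]; exists [:: (true, i)]; rewrite ?wprod_seq1.
Qed.

Definition Hev : {group gT} := <<[set (x ij.1 * x ij.2)%g | ij : 'I_n * 'I_n]>>%G.

Lemma Hev_pair i j : (x i * x j)%g \in Hev.
Proof. by apply: mem_gen; apply/imsetP; exists (i, j). Qed.

Lemma Hev_even_word g :
  g \in Hev -> exists2 w, positive w && ~~ odd (size w) & g = wprod w.
Proof.
apply: gen_words => // [w1 w2 /andP[p1 e1] /andP[p2 e2]|_ /imsetP[[i j] _ ->]].
  by rewrite positive_cat size_cat oddD p1 p2 (negbTE e1) (negbTE e2).
by exists [:: (true, i); (true, j)]; rewrite // wprod_cons wprod_seq1.
Qed.

Definition i1 : 'I_n := Ordinal (leq_trans (isT : (0 < 2)%N) n_ge2).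
Definition i2 : 'I_n := Ordinal n_ge2.
Local Notation x1 := (x i1).

Lemma positive_word_parity w :
  positive w -> (x1 ^+ odd (size w) * wprod w)%g \in Hev.
Proof.
elim: w => [|[b i] w IH]; first by rewrite /wprod big_nil mulg1 group1.
case/andP=> /= b_pos /IH; rewrite wprod_cons /sgen b_pos /=.
case: (odd (size w)) => Hw; rewrite ?expg1 ?expg0 ?mul1g in Hw *.
  have -> : (x i * wprod w = (x i * x1) * (x1 * x1)^-1 * (x1 * wprod w))%g.
    by rewrite invMg !mulgA mulgK mulgKV.
  by rewrite groupMr // groupMr ?groupV; apply: Hev_pair.
by rewrite mulgA groupM ?Hev_pair.
Qed.

Lemma Hev_dichotomy g : g \in Hev \/ (x1 * g)%g \in Hev.
Proof.
have [w /positive_word_parity] := positive_word g.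
by case: (odd _) => /= Hw ->; [right | left; rewrite mul1g in Hw].
Qed.

Lemma notin_Hev g : g \notin Hev -> (x1 * g)%g \in Hev.
Proof. by case: (Hev_dichotomy g) => // ->. Qed.

Lemma notin_HevM g h : ((g * h)%g \notin Hev) = (g \notin Hev) (+) (h \notin Hev).
Proof.
case Hg: (g \in Hev); case Hh: (h \in Hev) => /=.
- by rewrite groupM.
- by rewrite groupMl // Hh.
- by rewrite groupMr // Hg.
have gx1_in : (g * x1^-1)%g \in Hev.
  by rewrite -groupV invMg invgK notin_Hev ?groupV ?Hg.
by rewrite -(mulgKV x1 g) -mulgA groupM ?notin_Hev ?Hh.
Qed.

Section ProperSubgroup.
Hypothesis Hev_proper : Hev != [set: gT] :> {set gT}.

Lemma x1_notin : x1 \notin Hev.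
Proof.
apply: contra Hev_proper => Hx1; apply/eqP/setP => g; rewrite inE.
by case: (Hev_dichotomy g) => // Hg; rewrite -(groupMl _ Hx1).
Qed.

Lemma x_notin i : x i \notin Hev.
Proof. by apply: contra x1_notin => Hxi; rewrite -(groupMl _ Hxi) Hev_pair. Qed.

Lemma sgen_notin b : sg b \notin Hev.
Proof. by case: b => [[|] i] /=; rewrite ?groupV x_notin. Qed.

Lemma card_compl_Hev : #|~: (Hev : {set gT})| = #|Hev|.
Proof.
have -> : ~: (Hev : {set gT}) = (x1^-1 *: Hev)%g.
  apply/setP => g; rewrite inE mem_lcoset invgK.
  have [Hg | nHg] := boolP (g \in Hev); last by rewrite notin_Hev.
  by rewrite groupMr // (negbTE x1_notin).
by rewrite card_lcoset.
Qed.

Lemma index_Hev : #|[set: gT] : Hev|%g = 2%N.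
Proof.
have := Lagrange (subsetT Hev).
rewrite cardsT -(cardsC Hev) card_compl_Hev addnn -muln2 => /eqP.
by rewrite eqn_mul2l (negbTE (lt0n_neq0 (cardG_gt0 Hev))) => /eqP.
Qed.

End ProperSubgroup.

(* From a state carrying a positive letter, every state with
   a positive letter is reached by a positive word, and one more step turns a
   negative letter into a positive one or back. *)
Definition reach s t := exists l, pos l s t.

Lemma reach_trans s u t : reach s u -> reach u t -> reach s t.
Proof. by move=> [l1 h1] [l2 h2]; exists (l1 + l2)%N; apply: pos_trans h1 h2. Qed.

Lemma reach_positive g i g' j : reach (g, (true, i)) (g', (true, j)).
Proof.
have [w pw ew] := positive_word (g^-1 * g' * (x j)^-1)%g.
exists (size (w ++ [:: (true, j)])).
have := @pos_word (w ++ [:: (true, j)]) (g, (true, i)).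
rewrite last_cat wprod_cat -ew wprod_seq1 /= mulgKV mulKVg; apply.
by apply: path_positive; rewrite // positive_cat pw.
Qed.

Definition other (j : 'I_n) : 'I_n := if j == i1 then i2 else i1.

Lemma other_neq j : other j != j.
Proof. by rewrite /other; have [->|] := eqVneq j i1; rewrite // eq_sym. Qed.

Lemma reach_all s t : reach s t.
Proof.
have to_pos (u : state) : exists g i, reach u (g, (true, i)).
  case: u => g [[|] i]; first by exists g, i, 0%N; exact: pos0.
  exists (g * x (other i))%g, (other i), 1%N.
  by apply: (@pos_step (g, (false, i)) (true, other i)); rewrite /sopp xpair_eqE /= other_neq.
have [g [i reach_s]] := to_pos s; apply: reach_trans reach_s _.
case: t => g' [[|] j]; first exact: reach_positive.
apply: reach_trans (reach_positive g i (g' * x j)%g (other j)) _; exists 1%N.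
have := @pos_step ((g' * x j)%g, (true, other j)) (false, j).
by rewrite /= mulgK; apply; rewrite /sopp xpair_eqE /= eq_sym other_neq.
Qed.

Definition base : state := (1%g, (true, i2)).
Definition loop l := pos l base base.

Lemma loop0 : loop 0. Proof. exact: pos0. Qed.

Lemma loopD u v : loop u -> loop v -> loop (u + v)%N.
Proof. exact: pos_trans. Qed.

Lemma loop_via (w : seq (sidx n)) e :
  path nbr (true, i2) (w ++ [:: (true, i2)]) ->
  pos e ((wprod w * x i2)%g, (true, i2)) base -> loop ((size w).+1 + e).
Proof.
move=> pw back; apply: pos_trans back.
have := @pos_word (w ++ [:: (true, i2)]) base.
by rewrite size_cat addn1 last_cat wprod_cat wprod_seq1 /= mul1g; apply.
Qed.

Lemma path_inverse_power m (a : sidx n) : (a == (true, i2)) || (a == (false, i1)) ->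
  path nbr a (nseq m (false, i1) ++ [:: (true, i2)]).
Proof.
elim: m a => [|m IH] a a_eq /=; last rewrite IH ?eqxx ?orbT // andbT.
  by rewrite andbT /nbr /sopp; case/orP: a_eq => /eqP ->.
by rewrite /nbr /sopp; case/orP: a_eq => /eqP ->.
Qed.

(* The words x_1^k x_2 and x_1^-(o-k) x_2, with o the order of x_1 and
   k = (o-1)/2, spell the same element and have lengths differing by 1 or 2;
   closing them up gives loops of lengths 2a and 2a + 2. *)
Lemma loops_consecutive_even : exists a, loop (2 * a)%N /\ loop (2 * a + 2)%N.
Proof.
set o := #[x1]%g; set k := o.-1./2.
have o0 : (0 < o)%N := order_gt0 _.
have [e back] := reach_all ((x1 ^+ k * x i2)%g, (true, i2)) base.
have loopA : loop (k.+1 + e).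
  have := @loop_via (nseq k (true, i1)) e; rewrite size_nseq wprod_nseq; apply => //.
  by apply: path_positive; rewrite // positive_cat /= andbT; apply/allP => b /nseqP[->].
have loopB : loop ((o - k)%N.+1 + e).
  have := @loop_via (nseq (o - k)%N (false, i1)) e; rewrite size_nseq wprod_nseq.
  have -> : ((x1^-1) ^+ (o - k)%N = x1 ^+ k)%g.
    rewrite expgVn; apply: (mulgI (x1 ^+ (o - k))%g).
    by rewrite mulgV -expgD subnK ?expg_order //; lia.
  by apply => //; apply: path_inverse_power; rewrite eqxx.
exists (k.+1 + e)%N; split; first by rewrite mul2n -addnn; apply: loopD.
have o_k : (o - k = k + 1 + ~~ odd o)%N by lia.
rewrite o_k in loopB; case: (odd o) loopB => loopB.
  by have := loopD loopB loopB; congr loop; lia.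
by have := loopD loopA loopB; congr loop; lia.
Qed.

Section FullSubgroup.
Hypothesis Hev_full : Hev = [set: gT] :> {set gT}.

(* x_1 is spelled by an even positive word w, so x_1 x_2 is spelled both by
   the word of length 2 and by w x_2 of odd length: one of the two closed
   loops has odd length. *)
Lemma loop_odd : exists2 b, odd b & loop b.
Proof.
have [w /andP[pw ew] x1w] : exists2 w, positive w && ~~ odd (size w) & x1 = wprod w.
  by apply: Hev_even_word; rewrite Hev_full inE.
have [e back] := reach_all ((x1 * x i2)%g, (true, i2)) base.
have loop1 : loop (2 + e).
  by apply: (@loop_via [:: (true, i1)]); rewrite ?wprod_seq1.
have loopw : loop ((size w).+1 + e).
  apply: loop_via; last by rewrite -x1w.
  by apply: path_positive; rewrite // positive_cat pw.
have [oe|ee] := boolP (odd e); first by exists (2 + e)%N; rewrite // oddD oe.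
by exists ((size w).+1 + e)%N; rewrite // oddD /= (negbTE ew) (negbTE ee).
Qed.

(* Combined with the even loops, the odd loop gives loops of every large
   length. *)
Lemma loops_all_large : exists N0, forall N, (N0 <= N)%N -> loop N.
Proof.
have [a [loop_a loop_a2]] := loops_consecutive_even.
have [b ob loop_b] := loop_odd.
have even_large := even_sums_large loop0 loopD loop_a loop_a2.
exists (2 * (a * a) + b)%N => N le_N.
have [oN|eN] := boolP (odd N).
  have -> : N = (2 * (N - b)./2 + b)%N.
    by have := odd_double_half (N - b); rewrite oddB ?oN ?ob; lia.
  by apply: loopD loop_b; apply: even_large; lia.
rewrite -[N]odd_double_half (negbTE eN) add0n -mul2n.
by apply: even_large; lia.
Qed.

Lemma primitive : exists M, forall s t l, (M <= l)%N -> pos l s t.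
Proof.
have [N0 loopN] := loops_all_large.
have [M hM] : exists M, forall (st : state * state) l, (M <= l)%N -> pos l st.1 st.2.
  apply: (@eventually_all _ (fun l st => pos l st.1 st.2)) => -[s t].
  have [e1 to_base] := reach_all s base.
  have [e2 from_base] := reach_all base t.
  exists (e1 + N0 + e2)%N => l le_l /=.
  have -> : l = (e1 + (l - e1 - e2) + e2)%N by lia.
  by apply: pos_trans from_base; apply: pos_trans to_base _; apply: loopN; lia.
by exists M => s t l /(hM (s, t)).
Qed.

(* Loops of the coprime lengths M+1 and M+2 force period 1. *)
Lemma chain_aperiodic : aperiodic x alpha.
Proof.
have [M hM] := primitive => s d d_loops.
have dM1 := d_loops M.+1 isT (hM s s M.+1 (leqnSn M)).
have dM2 := d_loops M.+2 isT (hM s s M.+2 (leqW (leqnSn M))).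
by apply/eqP; rewrite -dvdn1 -(dvdn_addr 1 dM1) addn1.
Qed.

End FullSubgroup.

Section ProperChain.
Hypothesis Hev_proper : Hev != [set: gT] :> {set gT}.

(* Each step multiplies the group coordinate by a generator outside Hev, so
   the coset of Hev is determined by the parity of the number of steps. *)
Lemma pos_parity l s t : pos l s t -> ((s.1^-1 * t.1)%g \notin Hev) = odd l.
Proof.
elim: l t => [|l IH] t.
  by rewrite /pos /=; case: eqP => [<-|]; rewrite ?ltxx // mulVg group1.
rewrite /pos /= => /exists_pos_product[u|u|u [su ut]]; rewrite ?ntrans_ge0 ?trans_ge0 //.
by rewrite (trans_pos_eq ut) mulgA notin_HevM IH // (sgen_notin Hev_proper) addbT.
Qed.

(* Since X_1 has group coordinate a generator, X_l lies in the coset of Hev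
   of parity l. *)
Lemma dist_parity l t : (0 < l)%N -> 0 < D l t -> (t.1 \notin Hev) = odd l.
Proof.
case: l => // l _; rewrite -add1n distD // => /exists_pos_product[s|s|s []].
- exact: dist_ge0.
- exact: ntrans_ge0.
rewrite /= /init_dist; case: eqP => [s1 _ st|]; last by rewrite ltxx.
by rewrite -(mulKVg s.1 t.1) notin_HevM (pos_parity st) s1 (sgen_notin Hev_proper).
Qed.

Lemma even_primitive : exists M, forall s t l, (M <= l)%N ->
  (s.1^-1 * t.1)%g \in Hev -> pos (2 * l) s t.
Proof.
have [a [loop_a loop_a2]] := loops_consecutive_even.
have even_large := even_sums_large loop0 loopD loop_a loop_a2.
have [M hM] : exists M, forall (st : state * state) l, (M <= l)%N ->
    (st.1.1^-1 * st.2.1)%g \in Hev -> pos (2 * l) st.1 st.2.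
  apply: (@eventually_all _ (fun l st =>
    (st.1.1^-1 * st.2.1)%g \in Hev -> pos (2 * l) st.1 st.2)) => -[s t].
  have [e1 to_base] := reach_all s base.
  have [e2 from_base] := reach_all base t.
  have := pos_parity to_base; have := pos_parity from_base.
  rewrite /= mulg1 invg1 mul1g => par2 par1.
  exists ((e1 + e2)./2 + a * a)%N => l le_l /= st_in.
  have e12 : ~~ odd (e1 + e2).
    by rewrite oddD -par1 -par2 -notin_HevM st_in.
  have -> : (2 * l = e1 + 2 * (l - (e1 + e2)./2) + e2)%N.
    by move: e12; rewrite -[(e1 + e2)%N]odd_double_half; lia.
  by apply: pos_trans from_base; apply: pos_trans to_base _; apply: even_large; lia.
by exists M => s t l /(hM (s, t)).
Qed.

(* Every loop at the base state has even length, so the period is 2. *)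
Lemma chain_not_aperiodic : ~ aperiodic x alpha.
Proof.
move=> ap; suff : 2%N = 1%N by [].
apply: (ap base) => l _ loop_l.
by rewrite dvdn2 -(pos_parity loop_l) mulVg group1.
Qed.

End ProperChain.

Definition eta h l (s : state) := D l s - D l (tau h s).
Definition discrepancy h l := \sum_s `|eta h l s|.

Lemma sum_tau h (F : state -> R) : \sum_s F (tau h s) = \sum_s F s.
Proof. by rewrite [RHS](reindex_inj (@tau_inj h)). Qed.

(* Since translation commutes with the chain, eta evolves by the chain. *)
Lemma eta_step h l m t :
  (0 < l)%N -> eta h (l + m) t = \sum_s eta h l s * Pn m s t.
Proof.
move=> l0; rewrite /eta !distD // [X in _ - X](reindex_inj (@tau_inj h)) /=.
by rewrite -sumrB; apply: eq_bigr => s _; rewrite ntrans_tau mulrBl.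
Qed.

Lemma eta_sum h l : (0 < l)%N -> \sum_s eta h l s = 0.
Proof.
by move=> l0; rewrite sumrB dist_sum // (sum_tau h (D l)) dist_sum // subrr.
Qed.

Lemma discrepancy_bounds h l : (0 < l)%N -> 0 <= discrepancy h l <= 2.
Proof.
move=> l0; rewrite sumr_ge0 //=.
apply: le_trans (ler_sum _ (fun s _ => ler_normB (D l s) (D l (tau h s)))) _.
rewrite big_split /= (sum_tau h (fun s => `|D l s|)).
by under eq_bigr do rewrite ger0_norm ?dist_ge0 //; rewrite dist_sum.
Qed.

Section Mixing.
Variables (m : nat) (dl : R) (cls : nat -> gT -> bool) (h : gT).
Hypothesis dl_gt0 : 0 < dl.
Hypothesis cls_support : forall l t, (0 < l)%N -> 0 < D l t -> cls l t.1.
Hypothesis cls_tau : forall l g, cls l (h * g)%g = cls l g.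
Hypothesis cls_pos : forall l s t, cls l s.1 -> cls l t.1 -> dl <= Pn m s t.

Lemma cls_nonempty l : (0 < l)%N -> exists t : state, cls l t.1.
Proof.
move=> l0; have [t Dt] : exists t, 0 < D l t.
  by apply: exists_pos_term; rewrite ?dist_sum ?ltr01 //; exact: dist_ge0.
by exists t; exact: cls_support Dt.
Qed.

Lemma eta_outside l s : (0 < l)%N -> ~~ cls l s.1 -> eta h l s = 0.
Proof.
move=> l0 s_out; have D0 (u : state) : ~~ cls l u.1 -> D l u = 0.
  move=> u_out; apply: le_anti; rewrite dist_ge0 andbT leNgt.
  by apply: contra u_out; exact: cls_support.
by rewrite /eta !D0 ?subrr //= cls_tau.
Qed.

Lemma discrepancy_contract l : (0 < l)%N ->
  discrepancy h (l + m) <= (1 - dl) * discrepancy h l.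
Proof.
move=> l0; have [t0 t0_in] := cls_nonempty l0.
rewrite /discrepancy; under eq_bigr do rewrite eta_step //.
apply: (doeblin_contraction (C := [pred s | cls l s.1])) t0_in _ => //.
- exact: ntrans_ge0.
- exact: ntrans_sum.
- exact: cls_pos.
- by move=> s; exact: eta_outside.
- exact: eta_sum.
- exact: ltW.
Qed.

Lemma discrepancy_vanishing : vanishing (discrepancy h).
Proof.
have [t t_in] := cls_nonempty (isT : (0 < 1)%N).
have dl_le1 : dl <= 1.
  apply: le_trans (cls_pos t_in t_in) _; rewrite -(ntrans_sum m t).
  by rewrite (bigD1 t) //= lerDl; apply: sumr_ge0 => u _; exact: ntrans_ge0.
apply: (@block_contraction_vanishing _ _ (1 - dl) 2 m).
- by rewrite subr_ge0 dl_le1 /= ltrBlDr ltrDl.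
- exact: discrepancy_bounds.
- exact: discrepancy_contract.
Qed.

End Mixing.

Lemma summed_sum l : (0 < l)%N -> \sum_g summed x alpha beta l g = 1.
Proof.
move=> l0; rewrite -(dist_sum l0) /summed.
by rewrite (pair_big xpredT xpredT (fun g a => D l (g, a))) /=; apply: eq_bigr => -[].
Qed.

Lemma summed_translate l g h :
  `|summed x alpha beta l g - summed x alpha beta l (h * g)| <= discrepancy h l.
Proof.
rewrite /summed -sumrB; apply: le_trans (ler_norm_sum _ _ _) _.
have -> : discrepancy h l = \sum_g' \sum_a `|eta h l (g', a)|.
  rewrite (pair_big xpredT xpredT (fun g a => `|eta h l (g, a)|)) /=.
  by apply: eq_bigr => -[].
by rewrite (bigD1 g) //= lerDl; apply: sumr_ge0 => g' _; apply: sumr_ge0.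
Qed.

Lemma summed_limit (A : {set gT}) (f : nat -> nat) g :
  (0 < #|A|)%N -> (forall l, (l <= f l)%N) ->
  (forall h, h \in A -> vanishing (discrepancy h)) ->
  (forall l, (0 < l)%N -> \sum_(h in A) summed x alpha beta (f l) (h * g) = 1) ->
  converges_to (fun l => summed x alpha beta (f l) g) (#|A|%:R)^-1.
Proof.
move=> A0 le_f mix A_sum.
apply: (@average_limit _ _ A _ (fun h l => summed x alpha beta (f l) (h * g))) => // h hA.
apply: vanishing_le (fun l => summed_translate (f l) g h) _.
exact: vanishing_comp (mix h hA).
Qed.

Lemma sum_translates (F : gT -> R) (A : {set gT}) g :
  \sum_(h in A) F (h * g)%g = \sum_(g' | (g' * g^-1)%g \in A) F g'.
Proof.
rewrite (reindex_inj (mulIg g^-1)%g) /=.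
by apply: eq_bigr => g' _; rewrite mulgKV.
Qed.

(* Case H = G: the chain is primitive, so every translation mixes and the
   summed process becomes uniform on G. *)
Theorem limit_full : Hev = [set: gT] :> {set gT} ->
  forall g, converges_to (fun l => summed x alpha beta l g) (#|[set: gT]|%:R)^-1.
Proof.
move=> Hev_full g; have [M pos_M] := primitive Hev_full.
have [dl dl0 le_dl] := @pos_lower_bound _ _ predT
  (fun st : state * state => Pn M.+1 st.1 st.2) (fun st _ => pos_M _ _ _ (leqnSn M)).
apply: (@summed_limit _ id) => //.
- move=> h _; apply: (@discrepancy_vanishing M.+1 dl (fun _ _ => true)) => //.
  by move=> l s t _ _; exact: (le_dl (s, t)).
- move=> l l0; rewrite sum_translates -(summed_sum l0).
  by apply: eq_bigl => g'; rewrite inE.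
Qed.

Section ProperLimits.
Hypothesis Hev_proper : Hev != [set: gT] :> {set gT}.

(* Translations by elements of Hev preserve the parity classes, and two
   states of the same class are joined with probability at least dl by an
   even number m of steps. *)
Lemma mixing_proper h : h \in Hev -> vanishing (discrepancy h).
Proof.
move=> hH; have [M pos_M] := even_primitive Hev_proper.
have [dl dl0 le_dl] := @pos_lower_bound _ _
  [pred st : state * state | (st.1.1^-1 * st.2.1)%g \in Hev]
  (fun st => Pn (2 * M.+1) st.1 st.2) (fun st => pos_M _ _ _ (leqnSn M)).
apply: (@discrepancy_vanishing (2 * M.+1) dl (fun l g => (g \notin Hev) == odd l)) => //.
- by move=> l t l0 /(dist_parity Hev_proper l0) ->.
- by move=> l g; rewrite notin_HevM hH.
- move=> l s t /eqP s_par /eqP t_par; apply: (le_dl (s, t)).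
  by rewrite inE /= -[_ \in _]negbK notin_HevM groupV s_par t_par addbb.
Qed.

Lemma summed_wrong_parity l g : (g \notin Hev) != odd l -> summed x alpha beta l g = 0.
Proof.
move=> g_par; apply: big1 => a _; case: l g_par => [|l] g_par //.
apply: le_anti; rewrite dist_ge0 andbT leNgt; apply: contra g_par => Dl.
by rewrite (dist_parity Hev_proper _ Dl).
Qed.

Lemma coset_mass l g : (0 < l)%N -> (g \notin Hev) = odd l ->
  \sum_(h in Hev) summed x alpha beta l (h * g) = 1.
Proof.
move=> l0 g_par; rewrite sum_translates -(summed_sum l0).
rewrite [RHS](bigID [pred g' | (g' * g^-1)%g \in Hev]) /=.
rewrite [X in _ = _ + X]big1 ?addr0 // => g' /negPf g'_out.
apply: summed_wrong_parity.
by rewrite -g_par -{1}(mulgKV g g') notin_HevM g'_out /=; case: (_ \notin _).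
Qed.

Lemma limit_parity (f : nat -> nat) (b : bool) g :
  (forall l, (l <= f l)%N) -> (forall l, odd (f l) = b) ->
  converges_to (fun l => summed x alpha beta (f l) g)
    (if (g \notin Hev) == b then (#|Hev|%:R)^-1 else 0).
Proof.
move=> le_f f_par; case: eqP => g_par.
  apply: summed_limit => //; first exact: mixing_proper.
  by move=> l l0; rewrite coset_mass ?f_par // (leq_trans l0).
move=> eps eps0; exists 0%N => l _.
by rewrite summed_wrong_parity ?subrr ?normr0 // f_par; apply/eqP.
Qed.

Theorem limits_proper :
  (forall g, converges_to (fun l => summed x alpha beta (2 * l) g)
               (if g \in Hev then (#|Hev|%:R)^-1 else 0)) /\
  (forall g, converges_to (fun l => summed x alpha beta (2 * l).+1 g)
               (if g \in Hev then 0 else (#|~: (Hev : {set gT})|%:R)^-1)).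
Proof.
have le_double l : (l <= 2 * l)%N by rewrite leq_pmull.
rewrite card_compl_Hev //; split=> g.
  have := @limit_parity (fun l => 2 * l)%N false g le_double.
  by case: (g \in Hev) => /= conv; apply: conv => l; rewrite oddM.
have := @limit_parity (fun l => (2 * l).+1)%N true g (fun l => leqW (le_double l)).
by case: (g \in Hev) => /= conv; apply: conv => l; rewrite /= oddM.
Qed.

End ProperLimits.

End Walk.

Theorem mainTheorem6 (R : archiRealFieldType) (gT : finGroupType) (n : nat)
  (x : 'I_n -> gT) (alpha : sidx n -> sidx n -> R) (beta : sidx n -> R) :
  (2 <= n)%N ->
  <<[set x i | i : 'I_n]>>%g = [set: gT] ->
  (forall a b : sidx n, b != sopp a -> 0 < alpha a b) ->
  (forall a : sidx n, \sum_(b : sidx n | b != sopp a) alpha a b = 1) ->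
  (forall a : sidx n, 0 < beta a) ->
  \sum_(a : sidx n) beta a = 1 ->
  (aperiodic x alpha ->
     forall g : gT,
       converges_to (fun l => summed x alpha beta l g) (#|[set: gT]|%:R)^-1)
  /\
  (~ aperiodic x alpha ->
     exists H : {group gT},
       #|[set: gT] : H|%g = 2%N /\
       (forall i : 'I_n, x i \notin H) /\
       (forall g : gT,
          converges_to (fun l => summed x alpha beta (2 * l) g)
            (if g \in H then (#|H|%:R)^-1 else 0)) /\
       (forall g : gT,
          converges_to (fun l => summed x alpha beta (2 * l).+1 g)
            (if g \in H then 0 else (#|~: (H : {set gT})|%:R)^-1))).
Proof.
move=> n_ge2 x_gen alpha_pos alpha_sum beta_pos beta_sum.
have [Hev_full | Hev_proper] := eqVneq (Hev x : {set gT}) [set: gT].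
  split=> [_ | not_aperiodic]; first exact: limit_full.
  by case: not_aperiodic; apply: chain_aperiodic.
split=> [aperiodic_chain | _].
  by case: (chain_not_aperiodic n_ge2 x_gen alpha_pos Hev_proper aperiodic_chain).
exists (Hev x); split; first exact: index_Hev.
split; first exact: x_notin.
exact: limits_proper.
Qed.
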